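(* For every integer $n\ge 0$, \[ \sum_{k=0}^{n}(-4)^k\frac{\binom{n}{k}}{\binom{2k}{k}}\,k\,H_{2k} =\frac{n\{H_{n}-2H_{2n}\}}{(2n-1)(2n-3)}+\frac{n(20n^2-24n-1)}{(2n-1)^2(2n-3)^2}. \]
   Context: For an integer $m\ge 0$, $H_m$ denotes the $m$-th harmonic number: $H_0=0$ and $H_m=\sum_{j=1}^m \frac1j$ for $m\ge1$. $\binom{n}{k}$ is the usual binomial coefficient. *)

From HB Require Import structures.
From mathcomp Require Import all_boot all_order all_algebra.
Set Implicit Arguments. Unset Strict Implicit. Unset Printing Implicit Defensive.
Import Order.TTheory GRing.Theory Num.Theory.
Local Open Scope ring_scope.

Definition harmonic (m : nat) : rat := \sum_(1 <= j < m.+1) (j%:R)^-1.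

From HB Require Import structures.
From mathcomp Require Import all_boot all_order all_algebra.
From mathcomp Require Import ring zify.
Import Order.TTheory GRing.Theory Num.Theory.
Local Open Scope ring_scope.

(* Write c(n, k) = (-4)^k C(n, k) / C(2k, k).  The ratio recurrence
   (2k + 1) c(n, k+1) = -2 (n - k) c(n, k) makes every sum
   sum_k c(n, k) (-2 (n - k) q(k+1) - (2k - 1) q(k)) telescope to q(0); with q
   constant or linear this evaluates sum_k c(n, k) and sum_k k c(n, k).  For
   q(k) = (a k + b) H_(2k) with suitable constants a, b the summand becomes
   k H_(2k) plus c(n, k+1) times a rational function of k, which reduces to
   those two sums and to sum_(k >= 1) c(n, k) / k = H_n - 2 H_(2n).  The latter
   follows by induction on n from Pascal's rule and
   sum_k c(n, k) / (2k + 1) = 1 / (2n + 1). *)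


Lemma mul_central_binS k :
  (k.+1 * 'C(2 * k.+1, k.+1) = 2 * (2 * k).+1 * 'C(2 * k, k))%N.
Proof.
have := mul_bin_diag (2 * k.+1) k; have := mul_bin_down (2 * k).+1 k.
rewrite (_ : (2 * k.+1).-1 = (2 * k).+1)%N; last lia.
rewrite (_ : ((2 * k).+1 - k = k.+1)%N) /=; last lia.
by move=> down <-; rewrite -!mulnA down.
Qed.

Section CentralRatio.
Variable R : numFieldType.
Implicit Types (m k : nat) (q : nat -> R).

Lemma add1_natr_neq0 k : (1 + k%:R : R) != 0.
Proof. by rewrite addrC natr1 pnatr_eq0. Qed.

Lemma double_natr_add1_neq0 k : (2 * k%:R + 1 : R) != 0.
Proof. by rewrite -natrM natr1 pnatr_eq0. Qed.

Lemma double_natr_sub1_neq0 m : (2 * m%:R - 1 : R) != 0.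
Proof. by rewrite subr_eq0 -natrM -(mulr1n 1) eqr_nat; lia. Qed.

Lemma double_natr_sub3_neq0 m : (2 * m%:R - 3 : R) != 0.
Proof. by rewrite subr_eq0 -natrM eqr_nat; lia. Qed.

Lemma natr_mul_bin_left m k :
  ((k.+1 * 'C(m, k.+1))%:R : R) = (m%:R - k%:R) * 'C(m, k)%:R.
Proof.
rewrite mul_bin_left natrM; case: (leqP k m) => [km | mk]; first by rewrite natrB.
by rewrite bin_small // !mulr0.
Qed.

Definition central_ratio m k : R := (-4) ^+ k * ('C(m, k)%:R / 'C(2 * k, k)%:R).

Lemma central_ratio0 m : central_ratio m 0 = 1.
Proof. by rewrite /central_ratio expr0 mul1r muln0 !bin0 divr1. Qed.

Lemma central_ratio_small m k : (m < k)%N -> central_ratio m k = 0.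
Proof. by move=> mk; rewrite /central_ratio bin_small // mul0r mulr0. Qed.

Lemma central_ratioS_mul m k :
  central_ratio m k.+1 * (2 * k%:R + 1)
  = -2 * (-4) ^+ k * ((k.+1 * 'C(m, k.+1))%:R / 'C(2 * k, k)%:R).
Proof.
have central : ('C(2 * k.+1, k.+1)%:R : R) = 2 * (2 * k%:R + 1) * 'C(2 * k, k)%:R / k.+1%:R.
  have k1_neq0 : (k.+1%:R : R) != 0 by rewrite pnatr_eq0.
  have := congr1 (GRing.natmul (1 : R)) (mul_central_binS k).
  rewrite !natrM -[((2 * k).+1)%:R]natr1 natrM => e.
  by apply: (mulfI k1_neq0); rewrite e [RHS]mulrCA mulfV ?mulr1.
have binS_neq0 : ('C(2 * k, k)%:R : R) != 0.
  by rewrite pnatr_eq0 -lt0n bin_gt0 leq_pmull.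
rewrite /central_ratio central exprS natrM; field.
by rewrite binS_neq0 double_natr_add1_neq0 add1_natr_neq0.
Qed.

Lemma central_ratioS m k :
  central_ratio m k.+1 * (2 * k%:R + 1) = -2 * (m%:R - k%:R) * central_ratio m k.
Proof.
by rewrite central_ratioS_mul natr_mul_bin_left /central_ratio; ring.
Qed.

Lemma central_ratioSS m k :
  central_ratio m.+1 k.+1 * (2 * k%:R + 1) = -2 * m.+1%:R * central_ratio m k.
Proof.
by rewrite central_ratioS_mul -mul_bin_diag natrM /central_ratio; ring.
Qed.

Lemma central_ratioSS_sub m k :
  central_ratio m.+1 k.+1 =
  central_ratio m k.+1 - 2 * k.+1%:R * central_ratio m k / (2 * k%:R + 1).
Proof.
apply: (mulIf (double_natr_add1_neq0 k)).
rewrite mulrBl central_ratioSS central_ratioS divfK ?double_natr_add1_neq0 //.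
by rewrite -natr1; ring.
Qed.

Lemma sum_central_ratio_succ m (F : nat -> R) :
  \sum_(0 <= k < m.+1) central_ratio m k.+1 * F k.+1 =
  \sum_(1 <= k < m.+1) central_ratio m k * F k.
Proof.
by rewrite big_add1 /= big_nat_recr //= central_ratio_small // mul0r addr0.
Qed.

Lemma central_ratio_telescope m q :
  \sum_(0 <= k < m.+1)
     central_ratio m k * (-2 * (m%:R - k%:R) * q k.+1 - (2 * k%:R - 1) * q k)
  = q 0%N.
Proof.
pose F k := central_ratio m k * (2 * k%:R - 1) * q k.
rewrite (@telescope_sumr_eq _ _ _ F) // => [|k _].
  by rewrite /F central_ratio_small // central_ratio0; ring.
rewrite /F; have -> : 2 * k.+1%:R - 1 = 2 * k%:R + 1 :> R by rewrite -natr1; ring.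
by rewrite central_ratioS; ring.
Qed.

Lemma sum_central_ratio m :
  \sum_(0 <= k < m.+1) central_ratio m k = - (2 * m%:R - 1)^-1.
Proof.
have := central_ratio_telescope m (fun=> 1).
rewrite (eq_bigr (fun k => central_ratio m k * (1 - 2 * m%:R))) => [|k _]; last first.
  by congr (_ * _); ring.
rewrite -mulr_suml => sum_mul.
have h : (1 - 2 * m%:R : R) != 0 by rewrite -opprB oppr_eq0 double_natr_sub1_neq0.
by apply: (mulIf h); rewrite sum_mul; field; rewrite double_natr_sub1_neq0.
Qed.

Lemma sum_central_ratio_mul_natr m :
  \sum_(0 <= k < m.+1) central_ratio m k * k%:R
  = 2 * m%:R / ((2 * m%:R - 1) * (2 * m%:R - 3)).
Proof.
have := central_ratio_telescope m (fun k => k%:R).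
rewrite (eq_bigr (fun k => central_ratio m k * k%:R * (3 - 2 * m%:R)
                           - central_ratio m k * (2 * m%:R))) => [|k _]; last first.
  by rewrite -natr1; ring.
rewrite sumrB -!mulr_suml sum_central_ratio => /subr0_eq sum_mul.
have h3 : (3 - 2 * m%:R : R) != 0 by rewrite -opprB oppr_eq0 double_natr_sub3_neq0.
apply: (mulIf h3); rewrite sum_mul; field.
by rewrite double_natr_sub1_neq0 double_natr_sub3_neq0.
Qed.

Lemma sum_central_ratio_div_odd m :
  \sum_(0 <= k < m.+1) central_ratio m k / (2 * k%:R + 1) = (2 * m%:R + 1)^-1.
Proof.
have m1_neq0 : (m.+1%:R : R) != 0 by rewrite pnatr_eq0.
rewrite (eq_bigr (fun k => - (2 * m.+1%:R)^-1 * central_ratio m.+1 k.+1)) => [|k _].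
  have sumS := sum_central_ratio m.+1.
  rewrite big_nat_recl // central_ratio0 in sumS.
  rewrite -mulr_sumr (_ : \sum_(0 <= k < m.+1) _ = - (2 * m.+1%:R - 1)^-1 - 1).
    have -> : 2 * m.+1%:R - 1 = 2 * m%:R + 1 :> R by rewrite -natr1; ring.
    by field; rewrite add1_natr_neq0 double_natr_add1_neq0.
  by rewrite -sumS addrC addKr.
rewrite -[central_ratio m.+1 k.+1](mulfK (double_natr_add1_neq0 k)) central_ratioSS.
by field; rewrite add1_natr_neq0 double_natr_add1_neq0.
Qed.
End CentralRatio.

Arguments central_ratio {R} m k.
Arguments sum_central_ratio_succ {R} m F.

Lemma harmonic0 : harmonic 0 = 0.
Proof. by rewrite /harmonic big_geq. Qed.

Lemma harmonicS n : harmonic n.+1 = harmonic n + n.+1%:R^-1.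
Proof. by rewrite /harmonic big_nat_recr. Qed.

Lemma harmonic_doubleS k :
  harmonic (2 * k.+1) = harmonic (2 * k) + (2 * k%:R + 1)^-1 + (2 * k.+1%:R)^-1.
Proof.
have e : (2 * k.+1 = (2 * k).+2)%N by lia.
by rewrite e !harmonicS -!natrM natr1 e.
Qed.

Lemma sum_central_ratio_div_natr m :
  \sum_(1 <= k < m.+1) central_ratio m k / k%:R = harmonic m - 2 * harmonic (2 * m).
Proof.
elim: m => [|m IH]; first by rewrite big_geq // muln0 harmonic0; ring.
rewrite big_add1 /=.
rewrite (eq_bigr (fun k => central_ratio m k.+1 / k.+1%:R
                          - 2 * (central_ratio m k / (2 * k%:R + 1)))) => [|k _]; last first.
  by rewrite central_ratioSS_sub; field; rewrite add1_natr_neq0 double_natr_add1_neq0.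
rewrite sumrB -mulr_sumr sum_central_ratio_div_odd.
rewrite (sum_central_ratio_succ m (fun k => k%:R^-1)) IH harmonicS harmonic_doubleS.
by field; rewrite add1_natr_neq0 double_natr_add1_neq0.
Qed.

Section HarmonicCentralSum.
Variable m : nat.

(* The unique constants for which the H_(2k)-coefficient of the telescoped
   summand with weight [q] is exactly [k]. *)
Let a : rat := - (2 * m%:R - 3)^-1.
Let b : rat := 2 * m%:R / ((2 * m%:R - 1) * (2 * m%:R - 3)).
Let q k : rat := (a * k%:R + b) * harmonic (2 * k).

Lemma central_ratio_harmonic_step k :
  central_ratio m k * k%:R * harmonic (2 * k)
  = central_ratio m k * (-2 * (m%:R - k%:R) * q k.+1 - (2 * k%:R - 1) * q k)
    - central_ratio m k.+1 * (2 * a * k.+1%:R + (2 * b - a / 2) - b / 2 / k.+1%:R).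
Proof.
rewrite /q /a /b harmonic_doubleS.
rewrite -[central_ratio m k.+1](mulfK (double_natr_add1_neq0 _ k)) central_ratioS.
field.
by rewrite add1_natr_neq0 double_natr_sub1_neq0 double_natr_sub3_neq0 double_natr_add1_neq0.
Qed.

Lemma sum_central_ratio_harmonic :
  \sum_(0 <= k < m.+1) central_ratio m k * k%:R * harmonic (2 * k)
  = - (2 * a * (2 * m%:R / ((2 * m%:R - 1) * (2 * m%:R - 3)))
       + (2 * b - a / 2) * (- (2 * m%:R - 1)^-1 - 1)
       - b / 2 * (harmonic m - 2 * harmonic (2 * m))).
Proof.
rewrite (eq_bigr _ (fun k _ => central_ratio_harmonic_step k)) sumrB.
rewrite central_ratio_telescope /q muln0 harmonic0 mulr0 sub0r.
rewrite (sum_central_ratio_succ m (fun j => 2 * a * j%:R + (2 * b - a / 2) - b / 2 / j%:R)).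
have sum1 : \sum_(1 <= k < m.+1) central_ratio m k = - (2 * m%:R - 1)^-1 - 1 :> rat.
  by rewrite -sum_central_ratio [in RHS]big_ltn // central_ratio0 addrC addKr.
have sum_natr : \sum_(1 <= k < m.+1) central_ratio m k * k%:R
              = 2 * m%:R / ((2 * m%:R - 1) * (2 * m%:R - 3)) :> rat.
  by rewrite -sum_central_ratio_mul_natr [in RHS]big_ltn // mulr0 add0r.
rewrite (eq_bigr (fun k => 2 * a * (central_ratio m k * k%:R)
                          + (2 * b - a / 2) * central_ratio m k
                          - b / 2 * (central_ratio m k / k%:R))) => [|k _]; last by ring.
by rewrite sumrB big_split /= -!mulr_sumr sum1 sum_natr sum_central_ratio_div_natr.
Qed.
End HarmonicCentralSum.

Theorem theorem2 (n : nat) :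
  \sum_(0 <= k < n.+1)
      (-4 : rat) ^+ k * ('C(n, k)%:R / 'C(2 * k, k)%:R) * k%:R * harmonic (2 * k)
  = (n%:R * (harmonic n - 2 * harmonic (2 * n)))
      / ((2 * n%:R - 1) * (2 * n%:R - 3))
    + (n%:R * (20 * n%:R ^+ 2 - 24 * n%:R - 1))
      / ((2 * n%:R - 1) ^+ 2 * (2 * n%:R - 3) ^+ 2).
Proof.
rewrite -[LHS]/(\sum_(0 <= k < n.+1) central_ratio n k * k%:R * harmonic (2 * k)).
rewrite sum_central_ratio_harmonic; field.
by rewrite double_natr_sub1_neq0 double_natr_sub3_neq0.
Qed.
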